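(* Let $\Pi_n=\{\pi_1,\ldots,\pi_n\}$ be a finite set of policies of a discrete mean-field game (setting in the context) with $J$ $\mu$-diff-affine. Then the restricted game on $\Pi_n$ admits a Nash equilibrium $\nu\in\Delta(\Pi_n)$ (i.e. $J(\pi_k,\mu(\nu))\le J(\pi(\nu),\mu(\nu))$ for all $k$), a correlated equilibrium and a coarse correlated equilibrium.
   Context: A discrete mean-field game consists of finite state set $\mathcal X$, finite action set $\mathcal A$, reward $r:\mathcal X\times\mathcal A\times\Delta(\mathcal X)\to\mathbb R$, transitions $p(x'\mid x,a)$ independent of the population distribution, initial distribution $\mu_0$. A policy is $\pi:\mathcal X\to\Delta(\mathcal A)$; $\mu^\pi$ is its state occupancy measure; $J(\pi,\mu)=\sum_{x,a}\mu^\pi(x)\pi(x,a)r(x,a,\mu)$. For $\nu\in\Delta(\Pi_n)$, $\mu(\nu)=\sum_j\nu(\pi_j)\mu^{\pi_j}$ and $J(\pi(\nu),\mu)=\sum_i\nu(\pi_i)J(\pi_i,\mu)$. $J$ is $\mu$-diff-affine if for all policies $\pi,\pi'$ the map $\mu\mapsto J(\pi,\mu)-J(\pi',\mu)$ is affine. A restricted coarse correlated equilibrium is a finitely supported distribution $\rho$ over $\Delta(\Pi_n)$ with $\mathbb E_{\nu\sim\rho}[J(\pi_k,\mu(\nu))-J(\pi(\nu),\mu(\nu))]\le0$ for all $k$; a restricted correlated equilibrium is such a $\rho$ with $\sum_\nu\rho(\nu)\nu(\pi_i)\big(J(\pi_k,\mu(\nu))-J(\pi_i,\mu(\nu))\big)\le0$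 for all $i,k$. *)

From HB Require Import structures.
From mathcomp Require Import all_boot all_order all_algebra.
From mathcomp Require Import reals.
Set Implicit Arguments. Unset Strict Implicit. Unset Printing Implicit Defensive.
Import Order.TTheory GRing.Theory Num.Theory.
Local Open Scope ring_scope.

Section MFG.
Variable R : realType.

Definition is_dist (T : finType) (m : {ffun T -> R}) : Prop :=
  (forall x, 0 <= m x) /\ \sum_x m x = 1.

Variables (X A : finType).

Definition policy := {ffun X -> {ffun A -> R}}.
Definition is_policy (pi : policy) : Prop := forall x, is_dist (pi x).

(* occ : pi |-> mu^pi (state occupancy measure), r : reward r(x,a,mu) *)
Variable occ : policy -> {ffun X -> R}.
Variable r : X -> A -> {ffun X -> R} -> R.

Definition J (pi : policy) (mu : {ffun X -> R}) : R :=
  \sum_x \sum_a occ pi x * pi x a * r x a mu.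

Definition mu_diff_affine : Prop :=
  forall pi pi' : policy, is_policy pi -> is_policy pi' ->
  forall (mu1 mu2 : {ffun X -> R}) (t : R),
    is_dist mu1 -> is_dist mu2 -> 0 <= t <= 1 ->
    let mu := [ffun x => t * mu1 x + (1 - t) * mu2 x] in
    J pi mu - J pi' mu
    = t * (J pi mu1 - J pi' mu1) + (1 - t) * (J pi mu2 - J pi' mu2).

Variables (n : nat) (pol : 'I_n -> policy).

Definition mu_of (nu : {ffun 'I_n -> R}) : {ffun X -> R} :=
  [ffun x => \sum_j nu j * occ (pol j) x].

(* J(pi(nu), mu) = sum_i nu(pi_i) J(pi_i, mu) *)
Definition J_mix (nu : {ffun 'I_n -> R}) (mu : {ffun X -> R}) : R :=
  \sum_i nu i * J (pol i) mu.

Definition restricted_nash (nu : {ffun 'I_n -> R}) : Prop :=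
  is_dist nu /\ forall k, J (pol k) (mu_of nu) <= J_mix nu (mu_of nu).

(* A finitely supported distribution rho over Delta(Pi_n), given as a finite
   list of (weight, nu) pairs: weights nonnegative summing to 1, each nu in
   Delta(Pi_n); rho(nu) is the total weight of the entries equal to nu. *)
Definition fs_dist (rho : seq (R * {ffun 'I_n -> R})) : Prop :=
  (forall p, p \in rho -> 0 <= p.1 /\ is_dist p.2) /\
  \sum_(p <- rho) p.1 = 1.

Definition restricted_cce (rho : seq (R * {ffun 'I_n -> R})) : Prop :=
  fs_dist rho /\
  forall k, \sum_(p <- rho)
    p.1 * (J (pol k) (mu_of p.2) - J_mix p.2 (mu_of p.2)) <= 0.

Definition restricted_ce (rho : seq (R * {ffun 'I_n -> R})) : Prop :=
  fs_dist rho /\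
  forall i k, \sum_(p <- rho)
    p.1 * p.2 i * (J (pol k) (mu_of p.2) - J (pol i) (mu_of p.2)) <= 0.

End MFG.

From HB Require Import structures.
From mathcomp Require Import all_boot all_order all_algebra.
From mathcomp Require Import reals boolp.
From mathcomp Require Import ring lra.
Set Implicit Arguments. Unset Strict Implicit. Unset Printing Implicit Defensive.
Import Order.TTheory GRing.Theory Num.Theory.
Local Open Scope ring_scope.

(* Fix a reference policy [pi_0].  As [J] is mu-diff-affine and [mu(nu)] is the
   [nu]-mixture of the occupancy measures, the gains
   [G k j := J(pi_k, mu^pi_j) - J(pi_0, mu^pi_j)] turn the restricted game into a
   symmetric bimatrix game, and [nu] is a restricted Nash equilibrium iff it is a
   symmetric equilibrium of [G].  After shifting [G] to a positive matrix [M],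
   such an equilibrium is the normalisation of a nonzero solution of the linear
   complementarity problem [M z + w = 1, z, w >= 0, z_i w_i = 0].  That solution
   comes from the Lemke-Howson parity argument: under a lexicographic
   perturbation, the feasible bases that are complementary except possibly at a
   label [l] form a graph whose odd-degree vertices are exactly the complementary
   bases; there is an even number of them and the artificial basis [{w}] is one,
   so another one exists and yields the solution.  Finally a Nash equilibrium,
   seen as a point mass, is a correlated and a coarse correlated equilibrium. *)

Section LexOrder.
Variables (R : realFieldType) (p : nat).
Implicit Types (u v : 'rV[R]_p) (a : R).

Definition lex_nonneg u : Prop :=
  forall k : 'I_p, (forall j : 'I_p, (j < k)%N -> u 0 j = 0) -> 0 <= u 0 k.

Definition lex_le u v := lex_nonneg (v - u).

Lemma lex_nonneg0 : lex_nonneg 0.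
Proof. by move=> k _; rewrite mxE. Qed.

Lemma lex_nonneg_lead u (k : 'I_p) :
  (forall j : 'I_p, (j < k)%N -> u 0 j = 0) -> 0 < u 0 k -> lex_nonneg u.
Proof.
move=> u0 uk i ui; case: (ltngtP i k) => [ik|ki|/val_inj ->]; last exact: ltW.
- by rewrite u0.
- by move: uk; rewrite ui // ltxx.
Qed.

Lemma lex_nonneg_head u (k : 'I_p) : k = 0%N :> nat -> lex_nonneg u -> 0 <= u 0 k.
Proof. by move=> k0 /(_ k); apply=> j; rewrite k0. Qed.

Lemma lex_nonneg_total u : lex_nonneg u \/ lex_nonneg (- u).
Proof.
case: (pickP [pred k : 'I_p | u 0 k != 0]) => [k0 uk0|u0]; last first.
  by left=> k _; have /negbFE/eqP -> := u0 k.
case: (arg_minnP val uk0) => k /= ukn kmin.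
have pre (j : 'I_p) : (j < k)%N -> u 0 j = 0.
  by apply: contraTeq => uj; rewrite -leqNgt kmin.
case: (ltgtP (u 0 k) 0) => [uk|uk|uk]; last by rewrite uk eqxx in ukn.
- right; apply: (@lex_nonneg_lead _ k) => [j /pre|]; rewrite mxE ?oppr_gt0 //.
  by move=> ->; rewrite oppr0.
- by left; apply: lex_nonneg_lead uk.
Qed.

Lemma lex_nonnegD_prefix u v (n : nat) : lex_nonneg u -> lex_nonneg v ->
  (forall j : 'I_p, (j < n)%N -> u 0 j + v 0 j = 0) ->
  forall j : 'I_p, (j < n)%N -> u 0 j = 0 /\ v 0 j = 0.
Proof.
move=> hu hv; elim: n => [//|n IH] huv.
have pre := IH (fun j jn => huv j (leqW jn)).
move=> j; rewrite ltnS leq_eqVlt => /predU1P [jn|]; last exact: pre.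
have uj : 0 <= u 0 j by apply: hu => i; rewrite jn => /pre [].
have vj : 0 <= v 0 j by apply: hv => i; rewrite jn => /pre [].
have := huv j; rewrite jn ltnSn => /(_ isT) /eqP.
by rewrite paddr_eq0 // => /andP [/eqP -> /eqP ->].
Qed.

Lemma lex_nonnegD u v : lex_nonneg u -> lex_nonneg v -> lex_nonneg (u + v).
Proof.
move=> hu hv k huv.
have /(lex_nonnegD_prefix hu hv) pre : forall j : 'I_p, (j < k)%N -> u 0 j + v 0 j = 0.
  by move=> j /huv; rewrite mxE.
by rewrite mxE addr_ge0 //; [apply: hu | apply: hv] => j /pre [].
Qed.

Lemma lex_nonnegZ a u : 0 <= a -> lex_nonneg u -> lex_nonneg (a *: u).
Proof.
move=> a_ge0 hu k hk; rewrite mxE.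
have [->|a_neq0] := eqVneq a 0; first by rewrite mul0r.
by apply/mulr_ge0/hu => // j /hk /eqP; rewrite mxE mulf_eq0 (negbTE a_neq0) => /eqP.
Qed.

Lemma lex_nonneg_anti u : lex_nonneg u -> lex_nonneg (- u) -> u = 0.
Proof.
move=> hu hNu; apply/rowP => j; rewrite mxE.
apply: (lex_nonnegD_prefix hu hNu _ (ltn_ord j)).1 => i _.
by rewrite mxE addrN.
Qed.

Lemma lex_le_refl u : lex_le u u.
Proof. by rewrite /lex_le subrr; exact: lex_nonneg0. Qed.

Lemma lex_le_trans u v w : lex_le u v -> lex_le v w -> lex_le u w.
Proof. by move=> huv hvw; have := lex_nonnegD hvw huv; rewrite addrA subrK. Qed.

Lemma lex_le_anti u v : lex_le u v -> lex_le v u -> u = v.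
Proof.
move=> huv hvu; apply/eqP; rewrite -subr_eq0; apply/eqP/lex_nonneg_anti => //.
by rewrite opprB.
Qed.

Lemma lex_le_total u v : lex_le u v \/ lex_le v u.
Proof. by rewrite /lex_le -[u - v]opprB; exact: lex_nonneg_total. Qed.

Lemma lex_nonnegDZ_neg a u v : a < 0 ->
  lex_nonneg (u + a *: v) <-> lex_le v ((- a)^-1 *: u).
Proof.
move=> a_lt0; have Na_gt0 : 0 < - a by rewrite oppr_gt0.
have -> : u + a *: v = (- a) *: ((- a)^-1 *: u - v).
  by rewrite scalerBr scalerA divff ?scale1r ?gt_eqF // scaleNr opprK.
split=> [|h]; last by apply: lex_nonnegZ h; exact: ltW.
move/(lex_nonnegZ (a := (- a)^-1)); rewrite scalerA mulVf ?gt_eqF // scale1r.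
by apply; rewrite invr_ge0 ltW.
Qed.

Lemma lex_min_exists (T : eqType) (f : T -> 'rV[R]_p) (s : seq T) : s != [::] ->
  exists2 t, t \in s & forall t', t' \in s -> lex_le (f t) (f t').
Proof.
elim: s => [//|a s IH] _.
have [->|/IH [t ts tmin]] := eqVneq s [::].
  by exists a => [|t']; rewrite ?mem_seq1 // => /eqP ->; exact: lex_le_refl.
have [le_at|le_ta] := lex_le_total (f a) (f t).
  exists a => [|t']; rewrite ?mem_head // inE => /predU1P [->|/tmin].
    exact: lex_le_refl.
  exact: lex_le_trans.
exists t => [|t']; rewrite inE ?ts ?orbT // => /predU1P [->|/tmin //].
exact: le_ta.
Qed.

End LexOrder.

Lemma odd_sum_card (T : finType) (a : T -> nat) :
  odd (\sum_x a x) = odd #|[set x | odd (a x)]|.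
Proof.
rewrite (eq_bigr (fun x => odd (a x) + (a x)./2.*2)%N) => [|x _]; last first.
  by rewrite odd_double_half.
rewrite big_split /= -(big_morph double doubleD (id1 := 0%N) (id2 := 0%N)) //.
rewrite oddD odd_double addbF -sum1dep_card [in RHS]big_mkcond /=.
by congr odd; apply: eq_bigr => x _; case: (odd _).
Qed.

Section Handshake.
Variables (T : finType) (E : rel T).
Hypotheses (E_sym : symmetric E) (E_irr : irreflexive E).

Lemma even_sum_degree : ~~ odd (\sum_x #|[set y | E x y]|).
Proof.
pose lt_rank (x y : T) := (enum_rank x < enum_rank y)%N.
have -> : (\sum_x #|[set y | E x y]| =
    \sum_x \sum_(y | E x y && lt_rank x y) 1 +
    \sum_x \sum_(y | E x y && ~~ lt_rank x y) 1)%N.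
  rewrite -big_split; apply: eq_bigr => x _.
  by rewrite -sum1dep_card (bigID (lt_rank x)).
suff -> : (\sum_x \sum_(y | E x y && ~~ lt_rank x y) 1 =
           \sum_x \sum_(y | E x y && lt_rank x y) 1)%N by rewrite addnn odd_double.
rewrite (exchange_big_dep predT) //=; apply: eq_bigr => x _; apply: eq_bigl => y.
rewrite E_sym /lt_rank -leqNgt leq_eqVlt; case: (eqVneq y x) => [->|neq_yx].
  by rewrite E_irr.
by rewrite (inj_eq val_inj) (inj_eq enum_rank_inj) eq_sym (negbTE neq_yx).
Qed.

Lemma even_card_odd_degree : ~~ odd #|[set x | odd #|[set y | E x y]|]|.
Proof. by rewrite -odd_sum_card even_sum_degree. Qed.

End Handshake.

Section LemkeHowson.
Variables (R : realFieldType) (m : nat) (M : 'M[R]_m).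
Hypothesis M_gt0 : forall i j, 0 < M i j.
(* the missing label of the Lemke-Howson paths *)
Variable l : 'I_m.

Local Notation var := 'I_(m + m).
Implicit Types (S : {set var}) (X : 'M[R]_(m + m, 1 + m)).

Definition zvar (i : 'I_m) : var := lshift m i.
Definition wvar (i : 'I_m) : var := rshift m i.

(* Lexicographic perturbation of [M z + w = 1]: a tableau [X] has one row per
   variable [z_i], [w_i]; its column 0 holds the values and its column [j.+1]
   the coefficient of [eps ^ j.+1] in the right-hand side [1 + (eps, .., eps^m)]. *)
Definition lcp_mx : 'M[R]_(m, m + m) := row_mx M 1%:M.
Definition lcp_rhs : 'M[R]_(m, 1 + m) := row_mx (const_mx 1) 1%:M.
Definition eps_cols : 'M[R]_(1 + m, m) := col_mx 0 1%:M.

Definition lex_feasible (X : 'M[R]_(m + m, 1 + m)) :=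
  lcp_mx *m X = lcp_rhs /\ forall c, lex_nonneg (row c X).

Definition rsupp p (Y : 'M[R]_(m + m, p)) : {set var} := [set c | row c Y != 0].

Definition vertex (S : {set var}) :=
  #|S| = m /\ exists2 X, lex_feasible X & rsupp X = S.

Lemma lcp_rhs_eps : lcp_rhs *m eps_cols = 1%:M.
Proof. by rewrite mul_row_col mulmx0 mul1mx add0r. Qed.

Lemma lcp_mx_z i j : lcp_mx i (zvar j) = M i j.
Proof. by rewrite row_mxEl. Qed.

Lemma lcp_mx_w i j : lcp_mx i (wvar j) = (i == j)%:R.
Proof. by rewrite row_mxEr mxE. Qed.

Lemma rsupp0 p (Y : 'M[R]_(m + m, p)) c : c \notin rsupp Y -> row c Y = 0.
Proof. by rewrite inE negbK => /eqP. Qed.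

Lemma rsupp_out p (Y : 'M[R]_(m + m, p)) S c :
  rsupp Y \subset S -> c \notin S -> row c Y = 0.
Proof. by move=> sYS cS; apply: rsupp0; apply: contra cS; exact: subsetP. Qed.

Lemma row_mul_col (d : 'cV[R]_(m + m)) p (t : 'rV[R]_p) c :
  row c (d *m t) = d c 0 *: t.
Proof. by apply/rowP => k; rewrite !mxE big_ord1. Qed.

Definition selmx (S : {set var}) : 'M[R]_(m + m, #|S|) :=
  \matrix_(c, j) (c == enum_val j)%:R.

Lemma selmxK S p (Y : 'M[R]_(m + m, p)) :
  rsupp Y \subset S -> selmx S *m ((selmx S)^T *m Y) = Y.
Proof.
move=> sYS; apply/matrixP => c k; rewrite mxE.
have delta (F : var -> R) a : \sum_c' ((c' == a)%:R * F c') = F a.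
  by rewrite (bigD1 a) //= eqxx mul1r big1 ?addr0 // => c' /negbTE ->; rewrite mul0r.
under eq_bigr do rewrite !mxE.
under eq_bigr do under eq_bigr do rewrite !mxE.
under eq_bigr do rewrite delta.
rewrite -(big_enum_val (fun x => (c == x)%:R * Y x k)).
have [cS|cS] := boolP (c \in S).
  rewrite (bigD1 c) //= eqxx mul1r big1 ?addr0 // => x /andP [_ /negbTE].
  by rewrite eq_sym => ->; rewrite mul0r.
rewrite big1 => [|x xS]; last first.
  by rewrite (_ : c == x = false) ?mul0r //; apply: contraNF cS => /eqP ->.
by have /rowP /(_ k) := rsupp_out sYS cS; rewrite !mxE.
Qed.

(* [lcp_mx *m X *m eps_cols = 1]: this is the nondegeneracy that the
   perturbation buys, every lex-feasible tableau has at least [m] basic rows. *)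
Lemma lex_feasible_rank S X : lex_feasible X -> rsupp X \subset S ->
  (m <= \rank (lcp_mx *m selmx S))%N.
Proof.
move=> [AX _] sXS.
have : lcp_mx *m selmx S *m ((selmx S)^T *m X *m eps_cols) = 1%:M.
  rewrite (_ : _ *m _ = lcp_mx *m (selmx S *m ((selmx S)^T *m X)) *m eps_cols).
    by rewrite selmxK // AX lcp_rhs_eps.
  by rewrite !mulmxA.
by move=> e; rewrite -[X in (X <= _)%N](mxrank1 R m) -e mxrankM_maxl.
Qed.

Lemma lex_feasible_supp X : lex_feasible X -> (m <= #|rsupp X|)%N.
Proof.
by move=> fX; apply: leq_trans (lex_feasible_rank fX (subxx _)) (rank_leq_col _).
Qed.

Lemma vertex_kernel S X p (Y : 'M[R]_(m + m, p)) : #|S| = m -> lex_feasible X ->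
  rsupp X \subset S -> rsupp Y \subset S -> lcp_mx *m Y = 0 -> Y = 0.
Proof.
move=> cardS fX sXS sYS AY.
set AS := lcp_mx *m selmx S.
have rkAS : \rank AS = #|S|.
  apply/eqP; rewrite eqn_leq rank_leq_col /=.
  by apply: leq_trans (lex_feasible_rank fX sXS); rewrite cardS.
have freeAS : row_free AS^T by rewrite /row_free mxrank_tr rkAS.
have : ((selmx S)^T *m Y)^T *m AS^T = 0 *m AS^T.
  by rewrite mul0mx -trmx_mul /AS -mulmxA selmxK // AY trmx0.
move/(row_free_inj freeAS)/(congr1 trmx); rewrite trmxK trmx0 => SY0.
by rewrite -(selmxK sYS) SY0 mulmx0.
Qed.

Lemma lcp_no_ray (d : 'cV[R]_(m + m)) :
  lcp_mx *m d = 0 -> (forall c, 0 <= d c 0) -> d = 0.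
Proof.
move=> Ad d_ge0.
have Ad0 i c : lcp_mx i c * d c 0 = 0.
  have : \sum_c lcp_mx i c * d c 0 = 0 by have /matrixP /(_ i 0) := Ad; rewrite !mxE.
  move/psumr_eq0P; apply=> // c' _; apply: mulr_ge0 (d_ge0 c').
  by case: (split_ordP c') => j ->; rewrite ?lcp_mx_z ?lcp_mx_w ?ler0n ?ltW.
apply/matrixP => c k; rewrite (ord1 k) mxE; case: (split_ordP c) => j ->.
  by have /eqP := Ad0 l (zvar j); rewrite lcp_mx_z mulf_eq0 gt_eqF // => /eqP.
by have := Ad0 j (wvar j); rewrite lcp_mx_w eqxx mul1r.
Qed.

Lemma pivot_dir S X c : lex_feasible X -> rsupp X = S -> c \notin S ->
  exists d : 'cV[R]_(m + m), [/\ lcp_mx *m d = 0, d c 0 = 1 &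
    forall c', c' \notin c |: S -> d c' 0 = 0].
Proof.
move=> [AX _] sX cS; pose e : 'cV[R]_(m + m) := delta_mx c 0.
pose Y := X *m eps_cols *m (lcp_mx *m e).
have Yout c' : c' \notin S -> Y c' 0 = 0.
  move=> c'S; have Xc' : row c' X = 0 by apply: rsupp0; rewrite sX.
  rewrite /Y -mulmxA mxE big1 // => k _.
  by have /rowP /(_ k) := Xc'; rewrite !mxE => ->; rewrite mul0r.
exists (e - Y); split.
- by rewrite /Y mulmxBr !mulmxA AX lcp_rhs_eps mul1mx subrr.
- by rewrite mxE [X in _ + X]mxE Yout // mxE !eqxx subr0.
- move=> c'; rewrite !inE negb_or => /andP [c'c c'S].
  by rewrite mxE [X in _ + X]mxE Yout // mxE (negbTE c'c) subr0.
Qed.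

Definition lex_ratio X (d : 'cV[R]_(m + m)) c := (- d c 0)^-1 *: row c X.

Lemma lex_ratio_step X d r : lex_feasible X -> lcp_mx *m d = 0 -> d r 0 < 0 ->
  (forall c, d c 0 < 0 -> lex_le (lex_ratio X d r) (lex_ratio X d c)) ->
  lex_feasible (X + d *m lex_ratio X d r) /\ row r (X + d *m lex_ratio X d r) = 0.
Proof.
move=> [AX X_ge0] Ad dr_lt0 rmin; set t := lex_ratio X d r.
have rowE c : row c (X + d *m t) = row c X + d c 0 *: t.
  by rewrite linearD /= row_mul_col.
have t_ge0 : lex_nonneg t.
  by apply: lex_nonnegZ (X_ge0 r); rewrite invr_ge0 oppr_ge0 ltW.
split; first split.
- by rewrite mulmxDr AX mulmxA Ad mul0mx addr0.
- move=> c; rewrite rowE; have [dc_lt0|dc_ge0] := ltP (d c 0) 0.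
    by apply/(lex_nonnegDZ_neg _ _ dc_lt0); apply: rmin.
  exact: lex_nonnegD (X_ge0 c) (lex_nonnegZ dc_ge0 t_ge0).
- by rewrite rowE /t /lex_ratio scalerA invrN mulrN mulfV ?lt_eqF // scaleN1r addrN.
Qed.

Lemma pivot_exists S c : vertex S -> c \notin S ->
  exists S', [/\ vertex S', S' != S & S' \subset c |: S].
Proof.
case=> cardS [X fX sX] cS; have [d [Ad dc dout]] := pivot_dir fX sX cS.
have [r0 dr0] : exists r, d r 0 < 0.
  case: (boolP [exists r, d r 0 < 0]) => [/existsP //|/existsPn dN].
  have d0 : d = 0 by apply: lcp_no_ray Ad _ => c'; rewrite leNgt dN.
  by move: dc; rewrite d0 mxE => /eqP; rewrite eq_sym oner_eq0.
have [|r] := lex_min_exists (lex_ratio X d) (s := enum [pred c' | d c' 0 < 0]).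
  apply/eqP => e; have := mem_enum [pred c' | d c' 0 < 0] r0.
  by rewrite e in_nil inE dr0.
rewrite mem_enum inE => dr rmin.
have {}rmin c' : d c' 0 < 0 -> lex_le (lex_ratio X d r) (lex_ratio X d c').
  by move=> dc'; apply: rmin; rewrite mem_enum.
have [fX' X'r] := lex_ratio_step fX Ad dr rmin.
set X' := X + _ in fX' X'r.
have rowX' c' : row c' X' = row c' X + d c' 0 *: lex_ratio X d r.
  by rewrite linearD /= row_mul_col.
have rS : r \in S.
  apply: contraT => rS; have : r \notin c |: S.
    by rewrite !inE negb_or rS andbT; apply/eqP => rc; move: dr; rewrite rc dc ltr10.
  by move/dout; move: dr => /[swap] ->; rewrite ltxx.
have sX' : rsupp X' \subset (c |: S) :\ r.
  apply/subsetP => c'; rewrite !inE; apply: contraNT; rewrite negb_and negbK.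
  case/orP => [/eqP ->|]; first by rewrite X'r.
  rewrite negb_or => /andP [c'c c'S]; apply/eqP.
  by rewrite rowX' dout ?inE ?negb_or ?c'c // scale0r addr0 (rsupp0 _) ?sX.
have cardX' : #|rsupp X'| = m.
  apply/eqP; rewrite eqn_leq lex_feasible_supp // andbT.
  apply: leq_trans (subset_leq_card sX') _.
  have := cardsD1 r (c |: S); rewrite cardsU1 cS cardS !inE rS orbT /=.
  by move=> /eqP; rewrite eqn_add2l => /eqP <-.
exists (rsupp X'); split => //.
- by split => //; exists X'.
- apply: (contraNneq _ cS) => <-; rewrite inE rowX' dc scale1r.
  have -> : row c X = 0 by apply: rsupp0; rewrite sX.
  rewrite (add0r (lex_ratio X d r)).
  have : row r X != 0 by rewrite -sX inE in rS.
  by apply: contraNneq => /eqP; rewrite scaler_eq0 invr_eq0 oppr_eq0 lt_eqF.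
- exact: subset_trans sX' (subD1set _ _).
Qed.

Section PivotDirection.
Variables (S : {set var}) (X : 'M[R]_(m + m, 1 + m)) (c : var) (d : 'cV[R]_(m + m)).
Hypotheses (cardS : #|S| = m) (fX : lex_feasible X) (sX : rsupp X = S).
Hypotheses (Ad : lcp_mx *m d = 0) (dc : d c 0 = 1).
Hypothesis dout : forall c', c' \notin c |: S -> d c' 0 = 0.

Lemma pivot_repr Y : lex_feasible Y -> rsupp Y \subset c |: S ->
  Y = X + d *m row c Y.
Proof.
move=> [AY _] sY; apply/eqP; rewrite -subr_eq0; apply/eqP.
apply: (vertex_kernel cardS fX); first by rewrite sX.
  apply/subsetP => c'; apply: contraTT => c'S; rewrite inE negbK linearB linearD /=.
  have -> : row c' X = 0 by apply: rsupp0; rewrite sX.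
  rewrite row_mul_col add0r; have [->|c'c] := eqVneq c' c.
    by rewrite dc scale1r subrr.
  have c'cS : c' \notin c |: S by rewrite !inE negb_or c'c.
  by rewrite dout // scale0r subr0 (rsupp_out sY).
by rewrite mulmxBr mulmxDr AY fX.1 mulmxA Ad mul0mx addr0 subrr.
Qed.

Lemma pivot_ratio Y : lex_feasible Y -> rsupp Y \subset c |: S ->
  #|rsupp Y| = m -> rsupp Y != S ->
  (exists2 r, d r 0 < 0 & row c Y = lex_ratio X d r) /\
  (forall c', d c' 0 < 0 -> lex_le (row c Y) (lex_ratio X d c')).
Proof.
move=> fY sY cardY neqYS.
have rowY c' : row c' Y = row c' X + d c' 0 *: row c Y.
  by rewrite {1}(pivot_repr fY sY) linearD /= row_mul_col.
split=> [|c' dc'_lt0]; last first.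
  by apply/(lex_nonnegDZ_neg _ _ dc'_lt0); rewrite -rowY; exact: fY.2.
have [r /andP [rS rY]] : exists r, (r \in S) && (r \notin rsupp Y).
  apply/existsP; move: neqYS; apply: contraR => /existsPn rSY.
  rewrite eq_sym eqEcard cardS cardY leqnn andbT.
  by apply/subsetP => x xS; have := rSY x; rewrite xS negbK.
have rX0 : row r X + d r 0 *: row c Y = 0 by rewrite -rowY rsupp0.
have dr_lt0 : d r 0 < 0.
  rewrite ltNge; apply: contraL rS => dr_ge0; rewrite -sX inE negbK; apply/eqP.
  apply: lex_nonneg_anti (fX.2 r) _.
  by rewrite (addr0_eq rX0); exact: lex_nonnegZ dr_ge0 (fY.2 c).
exists r => //; rewrite /lex_ratio -[row r X]opprK (addr0_eq rX0) -scaleNr scalerA.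
by rewrite mulVf ?scale1r // oppr_eq0 lt_eqF.
Qed.

End PivotDirection.

Lemma pivot_unique S S1 S2 c : vertex S -> c \notin S -> vertex S1 -> vertex S2 ->
  S1 != S -> S2 != S -> S1 \subset c |: S -> S2 \subset c |: S -> S1 = S2.
Proof.
case=> cardS [X fX sX] cS [card1 [Y1 fY1 eS1]] [card2 [Y2 fY2 eS2]].
subst S1 S2 => ne1 ne2 s1 s2.
have [d [Ad dc dout]] := pivot_dir fX sX cS.
have [[r1 dr1 eY1] min1] := pivot_ratio cardS fX sX Ad dc dout fY1 s1 card1 ne1.
have [[r2 dr2 eY2] min2] := pivot_ratio cardS fX sX Ad dc dout fY2 s2 card2 ne2.
have eYc : row c Y1 = row c Y2.
  by apply: lex_le_anti; [rewrite eY2; apply: min1 | rewrite eY1; apply: min2].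
rewrite (pivot_repr cardS fX sX Ad dc dout fY1 s1).
by rewrite (pivot_repr cardS fX sX Ad dc dout fY2 s2) eYc.
Qed.

Definition almost_compl (U : {set var}) : bool :=
  [forall i, (i != l) ==> ~~ ((zvar i \in U) && (wvar i \in U))].

Definition vertexb S : bool := `[< vertex S >].

Definition lh_edge S S' : bool :=
  [&& vertexb S, vertexb S', S != S', #|S :|: S'| == m.+1 & almost_compl (S :|: S')].

Definition entering S : {set var} := [set c | (c \notin S) && almost_compl (c |: S)].

Definition lh_pivot S c : {set var} :=
  odflt S [pick S' | vertexb S' && (S' != S) && (S' \subset c |: S)].

Lemma almost_complS (U V : {set var}) : U \subset V -> almost_compl V -> almost_compl U.
Proof.
move=> sUV /forallP complV; apply/forallP => i; apply/implyP => il.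
by apply: contra (implyP (complV i) il) => /andP [zU wU]; rewrite !(subsetP sUV).
Qed.

Lemma lh_pivotP S c : vertex S -> c \notin S ->
  [/\ vertex (lh_pivot S c), lh_pivot S c != S & lh_pivot S c \subset c |: S].
Proof.
move=> vS cS; rewrite /lh_pivot; case: pickP => [S' /andP [/andP [/asboolP]]|noS'] //=.
have [S' [vS' neS' sS']] := pivot_exists vS cS.
by move: (noS' S'); rewrite /vertexb neS' sS' (asboolT vS').
Qed.

Lemma vertex_setU S S' c : vertex S -> vertex S' -> S' != S -> S' \subset c |: S ->
  c \in S' /\ S :|: S' = c |: S.
Proof.
case=> cardS _ [cardS' _] neS'S sS'.
have cS' : c \in S'.
  apply: contraR neS'S => cS'; rewrite eqEcard cardS cardS' leqnn andbT.
  apply/subsetP => x xS'; have /setU1P [xc|//] := subsetP sS' x xS'.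
  by rewrite -xc xS' in cS'.
split=> //; apply/eqP; rewrite eqEsubset subUset subsetUr sS' /=.
by apply/subsetP => x /setU1P [->|xS]; rewrite inE ?cS' ?xS ?orbT.
Qed.

Lemma lh_edge_pivot S : vertex S ->
  [set S' | lh_edge S S'] = lh_pivot S @: entering S.
Proof.
move=> vS; have [cardS _] := vS; apply/setP => S'; rewrite inE; apply/idP/imsetP.
  case/and5P => _ /asboolP vS' neSS' /eqP cardU complU; have [cardS' _] := vS'.
  have [c /andP [cS' cS]] : exists c, (c \in S') && (c \notin S).
    apply/existsP; move: neSS'; apply: contraR => /existsPn S'S.
    rewrite eq_sym eqEcard cardS cardS' leqnn andbT.
    by apply/subsetP => x xS'; have := S'S x; rewrite xS' /= negbK.
  have eU : S :|: S' = c |: S.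
    apply/eqP; rewrite eq_sym eqEcard cardU cardsU1 cS cardS leqnn andbT.
    by apply/subsetP => x /setU1P [->|xS]; rewrite inE ?cS' ?xS ?orbT.
  have sS' : S' \subset c |: S by rewrite -eU subsetUr.
  exists c; first by rewrite inE cS -eU complU.
  have [vP neP sP] := lh_pivotP vS cS.
  by apply: (pivot_unique vS cS vS' vP _ neP sS' sP); rewrite eq_sym.
case=> c; rewrite inE => /andP [cS complc] ->.
have [vP neP sP] := lh_pivotP vS cS; have [_ eU] := vertex_setU vS vP neP sP.
rewrite /lh_edge eU cardsU1 cS cardS complc eq_sym neP !andbT /=.
by apply/and3P; split => //; apply/asboolP.
Qed.

Lemma lh_degree S : vertex S -> #|[set S' | lh_edge S S']| = #|entering S|.
Proof.
move=> vS; rewrite lh_edge_pivot //; apply: card_in_imset => c1 c2.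
rewrite !inE => /andP [c1S _] /andP [c2S _] eP.
have [vP neP sP] := lh_pivotP vS c1S; have [c1P _] := vertex_setU vS vP neP sP.
have [_ _ sP2] := lh_pivotP vS c2S.
rewrite eP in c1P; have /setU1P [//|c1S'] := subsetP sP2 c1 c1P.
by rewrite c1S' in c1S.
Qed.

Lemma almost_compl_z S i : almost_compl S ->
  almost_compl (zvar i |: S) = (i == l) || (wvar i \notin S).
Proof.
move=> /forallP complS; apply/forallP/idP => [/(_ i)|il j].
  by rewrite !in_setU1 eqxx /= eq_rlshift /=; case: eqVneq.
apply/implyP => jl; rewrite !in_setU1 eq_rlshift (inj_eq (@lshift_inj _ _)) /=.
have [ji|_] := eqVneq j i; last exact: implyP (complS j) jl.
by move: il; rewrite -ji (negbTE jl) /= => /negbTE ->.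
Qed.

Lemma almost_compl_w S i : almost_compl S ->
  almost_compl (wvar i |: S) = (i == l) || (zvar i \notin S).
Proof.
move=> /forallP complS; apply/forallP/idP => [/(_ i)|il j].
  by rewrite !in_setU1 eqxx /= eq_lrshift /= andbT; case: eqVneq.
apply/implyP => jl; rewrite !in_setU1 eq_lrshift (inj_eq (@rshift_inj _ _)) /=.
have [ji|_] := eqVneq j i; last exact: implyP (complS j) jl.
by move: il; rewrite -ji (negbTE jl) /= => /negbTE ->.
Qed.

(* Away from the label [l], entering variables come in pairs [z_i], [w_i]. *)
Lemma odd_card_entering S :
  odd #|entering S| = almost_compl S && ((zvar l \in S) (+) (wvar l \in S)).
Proof.
have [complS|ncomplS] := boolP (almost_compl S); last first.
  suff -> : entering S = set0 by rewrite cards0.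
  apply/setP => c; rewrite !inE; apply: contraNF ncomplS => /andP [_].
  exact/almost_complS/subsetUr.
pose f i := ((zvar i \in entering S) + (wvar i \in entering S))%N.
have cardE : #|entering S| = (\sum_i f i)%N.
  rewrite big_split /= -sum1_card big_mkcond big_split_ord /=.
  by congr (_ + _)%N; apply: eq_bigr => i _; case: (_ \in _).
have fE i : i != l -> f i = ((zvar i \notin S) && (wvar i \notin S)).*2.
  move=> il; rewrite /f !inE almost_compl_z // almost_compl_w // (negbTE il) /=.
  by case: (zvar i \in S); case: (wvar i \in S).
have fl : f l = ((zvar l \notin S) + (wvar l \notin S))%N.
  by rewrite /f !inE almost_compl_z // almost_compl_w // eqxx /= !andbT.
rewrite cardE (bigD1 l) //= (eq_bigr _ fE).
rewrite -(big_morph double doubleD (id1 := 0%N) (id2 := 0%N)) //.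
by rewrite oddD odd_double addbF fl oddD !oddb addbN addNb negbK.
Qed.

Definition wbasis : {set var} := [set wvar i | i : 'I_m].

Lemma zvar_notin_wbasis i : zvar i \notin wbasis.
Proof. by apply/imsetP => -[j _] /eqP; rewrite eq_lrshift. Qed.

Lemma vertex_wbasis : vertex wbasis.
Proof.
split; first by rewrite card_imset ?card_ord //; exact: rshift_inj.
exists (col_mx 0 lcp_rhs); first split.
- by rewrite mul_row_col mulmx0 mul1mx add0r.
- move=> c; case: (split_ordP c) => j ->.
    by rewrite rowKu row0; exact: lex_nonneg0.
  rewrite rowKd; apply: (@lex_nonneg_lead _ _ _ (lshift m 0)) => //.
  by rewrite mxE row_mxEl mxE ltr01.
apply/setP => c; rewrite inE; case: (split_ordP c) => j ->.
  by rewrite rowKu row0 eqxx (negbTE (zvar_notin_wbasis j)).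
rewrite rowKd mem_imset ?inE; last exact: rshift_inj.
apply/negP => /eqP /rowP /(_ (lshift m 0)).
by rewrite mxE row_mxEl !mxE => /eqP; rewrite oner_eq0.
Qed.

Lemma lh_other_end : exists S, [/\ vertex S, S != wbasis &
  forall i, ~~ ((zvar i \in S) && (wvar i \in S))].
Proof.
pose ends :=
  [set S | vertexb S && almost_compl S && ((zvar l \in S) (+) (wvar l \in S))].
have ends_odd : ends = [set S | odd #|[set S' | lh_edge S S']|].
  apply/setP => S; rewrite !inE; have [vS|nvS] := boolP (vertexb S).
    by rewrite lh_degree ?odd_card_entering //; apply/asboolP.
  suff -> : [set S' | lh_edge S S'] = set0 by rewrite cards0.
  by apply/setP => S'; rewrite !inE /lh_edge (negbTE nvS).
have even_ends : ~~ odd #|ends|.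
  rewrite ends_odd; apply: even_card_odd_degree => [S S'|S].
    by rewrite /lh_edge setUC eq_sym; case: (vertexb S); case: (vertexb S').
  by rewrite /lh_edge eqxx /= !andbF.
have wbasis_end : wbasis \in ends.
  rewrite inE (negbTE (zvar_notin_wbasis l)) mem_imset /=; last exact: rshift_inj.
  apply/andP; split => //; apply/andP; split; first exact/asboolP/vertex_wbasis.
  by apply/forallP => i; rewrite (negbTE (zvar_notin_wbasis i)) implybT.
have [S SE neSw] : exists2 S, S \in ends & S != wbasis.
  apply/exists_inP; apply: contraR even_ends => /exists_inPn endsw.
  suff -> : ends = [set wbasis] by rewrite cards1.
  apply/setP => S; rewrite in_set1; apply/idP/eqP => [SE|->//].
  by apply/eqP; rewrite -[_ == _]negbK endsw.
move: SE; rewrite inE => /andP [/andP [/asboolP vS complS] xorl].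
exists S; split => // i; have [->|il] := eqVneq i l.
  by move: xorl; case: (zvar l \in S); case: (wvar l \in S).
exact: implyP (forallP complS i) il.
Qed.

Lemma complementary_vertex_lcp S : vertex S -> S != wbasis ->
  (forall i, ~~ ((zvar i \in S) && (wvar i \in S))) ->
  exists z : 'cV[R]_m, [/\ forall j, 0 <= z j 0, forall i, (M *m z) i 0 <= 1,
    forall j, 0 < z j 0 -> (M *m z) j 0 = 1 & exists j, 0 < z j 0].
Proof.
case=> cardS [X [AX X_ge0] sX] neSw compl.
have [i0 zi0S] : exists i, zvar i \in S.
  apply/existsP; apply: contraR neSw => /existsPn zS.
  rewrite eqEcard cardS vertex_wbasis.1 leqnn andbT; apply/subsetP => c cS.
  case: (split_ordP c) => j cj; last by apply/imsetP; exists j.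
  by have := zS j; rewrite /zvar -cj cS.
pose k0 : 'I_(1 + m) := lshift m 0.
have X0 c : c \notin S -> X c k0 = 0.
  by rewrite -sX => /rsupp0 /rowP /(_ k0); rewrite !mxE.
have X_ge0' c : 0 <= X c k0.
  by have := lex_nonneg_head (k := k0) erefl (X_ge0 c); rewrite mxE.
pose z : 'cV[R]_m := \col_j X (zvar j) k0.
pose w : 'cV[R]_m := \col_j X (wvar j) k0.
have zw1 i : (M *m z) i 0 + w i 0 = 1.
  have /matrixP /(_ i k0) := AX.
  rewrite /k0 [X in _ = X -> _]row_mxEl [X in _ = X -> _]mxE => <-.
  rewrite [RHS]mxE big_split_ord /=; congr (_ + _).
    by rewrite mxE; apply: eq_bigr => j _; rewrite lcp_mx_z mxE.
  rewrite (bigD1 i) //= lcp_mx_w eqxx mul1r big1 ?addr0 ?mxE // => j ji.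
  by rewrite lcp_mx_w eq_sym (negbTE ji) mul0r.
have zw0 j : z j 0 = 0 \/ w j 0 = 0.
  by case/nandP: (compl j) => [/X0|/X0]; rewrite !mxE; [left | right].
exists z; split.
- by move=> j; rewrite mxE.
- by move=> i; have := zw1 i; have := X_ge0' (wvar i); rewrite [w _ _]mxE; lra.
- move=> j zj_gt0; have [zj0|wj0] := zw0 j; first by rewrite zj0 ltxx in zj_gt0.
  by have := zw1 j; rewrite wj0 addr0.
- apply/existsP; apply: contraT => /existsPn z_le0.
  have z0 : z = 0.
    apply/matrixP => j k; rewrite (ord1 k) [RHS]mxE; apply/eqP.
    by rewrite eq_le leNgt z_le0 mxE X_ge0'.
  have wi0 : w i0 0 = 0 by rewrite mxE X0 //; move: (compl i0); rewrite zi0S.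
  by have := zw1 i0; rewrite z0 mulmx0 wi0 mxE addr0 => /eqP; rewrite eq_sym oner_eq0.
Qed.

End LemkeHowson.

Theorem lcp_positive_solution (R : realFieldType) (m : nat) (M : 'M[R]_m) :
  (forall i j, 0 < M i j) -> (0 < m)%N ->
  exists z : 'cV[R]_m, [/\ forall j, 0 <= z j 0, forall i, (M *m z) i 0 <= 1,
    forall j, 0 < z j 0 -> (M *m z) j 0 = 1 & exists j, 0 < z j 0].
Proof.
move=> M_gt0 m_gt0; have [S [vS neSw compl]] := lh_other_end M_gt0 (Ordinal m_gt0).
exact: complementary_vertex_lcp vS neSw compl.
Qed.

(* Shifting [G] by a constant [c] does not change best responses, and the
   normalised solution [z / \sum z] of the LCP for [G + c > 0] is an equilibrium. *)
Lemma symmetric_nash_exists (R : realFieldType) (n : nat) (G : 'I_n -> 'I_n -> R) :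
  (0 < n)%N -> exists nu : 'I_n -> R, [/\ forall j, 0 <= nu j, \sum_j nu j = 1 &
    forall k, \sum_j G k j * nu j <= \sum_i nu i * \sum_j G i j * nu j].
Proof.
move=> n_gt0; pose c := 1 + \sum_(p : 'I_n * 'I_n) `|G p.1 p.2|.
have M_gt0 i j : 0 < (\matrix_(i, j) (G i j + c)) i j.
  rewrite mxE /c (bigD1 (i, j)) //=; have := ler_norm (- G i j); rewrite normrN.
  have : 0 <= \sum_(p | p != (i, j)) `|G p.1 p.2| by apply: sumr_ge0.
  lra.
have [z [z_ge0 Mz_le1 Mz_eq1 [j0 zj0_gt0]]] := lcp_positive_solution M_gt0 n_gt0.
pose s := \sum_j z j 0; pose a k := \sum_j G k j * z j 0.
have s_gt0 : 0 < s.
  by rewrite /s (bigD1 j0) //= ltr_pwDl ?sumr_ge0.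
have MzE i : (\matrix_(i, j) (G i j + c) *m z) i 0 = a i + c * s.
  rewrite mxE /a /s mulr_sumr -big_split; apply: eq_bigr => j _.
  by rewrite mxE mulrDl mulrC.
have a_le k : a k <= 1 - c * s by have := Mz_le1 k; rewrite MzE lerBrDr.
have za_eq i : z i 0 * a i = z i 0 * (1 - c * s).
  have [zi_gt0|] := ltP 0 (z i 0); first by rewrite -(Mz_eq1 i zi_gt0) MzE addrK.
  by rewrite le_eqVlt ltNge z_ge0 orbF => /eqP ->; rewrite !mul0r.
have Gnu k : \sum_j G k j * (z j 0 / s) = a k / s.
  by rewrite /a mulr_suml; apply: eq_bigr => j _; rewrite mulrA.
have payoffE : \sum_i z i 0 / s * \sum_j G i j * (z j 0 / s) = (1 - c * s) / s.
  transitivity (\sum_i z i 0 * (1 - c * s) / (s * s)).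
    by apply: eq_bigr => i _; rewrite Gnu -za_eq; field; rewrite gt_eqF.
  by rewrite -!mulr_suml -/s; field; rewrite gt_eqF.
exists (fun j => z j 0 / s); split.
- by move=> j; rewrite divr_ge0 ?z_ge0 ?ltW.
- by rewrite -mulr_suml mulfV ?gt_eqF.
- by move=> k; rewrite Gnu payoffE ler_pM2r ?invr_gt0.
Qed.

Section AffineOnDistributions.
Variables (R : realType) (X : finType).

Definition affine_on_dist (f : {ffun X -> R} -> R) :=
  forall (mu1 mu2 : {ffun X -> R}) (t : R),
    is_dist mu1 -> is_dist mu2 -> 0 <= t <= 1 ->
    f [ffun x => t * mu1 x + (1 - t) * mu2 x] = t * f mu1 + (1 - t) * f mu2.

Lemma is_dist_mix k (nu : 'I_k -> R) (mu : 'I_k -> {ffun X -> R}) :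
  (forall j, 0 <= nu j) -> \sum_j nu j = 1 -> (forall j, is_dist (mu j)) ->
  is_dist [ffun x => \sum_j nu j * mu j x].
Proof.
move=> nu_ge0 nu_sum1 mu_dist; split=> [x|].
  by rewrite ffunE sumr_ge0 // => j _; rewrite mulr_ge0 //; case: (mu_dist j).
under eq_bigr do rewrite ffunE.
rewrite exchange_big /= -nu_sum1; apply: eq_bigr => j _.
by rewrite -mulr_sumr; case: (mu_dist j) => _ ->; rewrite mulr1.
Qed.

Lemma affine_on_dist_mix f : affine_on_dist f ->
  forall k (nu : 'I_k -> R) (mu : 'I_k -> {ffun X -> R}),
  (forall j, 0 <= nu j) -> \sum_j nu j = 1 -> (forall j, is_dist (mu j)) ->
  f [ffun x => \sum_j nu j * mu j x] = \sum_j nu j * f (mu j).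
Proof.
move=> f_aff; elim=> [|k IH] nu mu nu_ge0 nu_sum1 mu_dist.
  by move: nu_sum1; rewrite big_ord0 => /eqP; rewrite eq_sym oner_eq0.
move: nu_sum1; rewrite !big_ord_recl; set t := nu ord0 => nu_sum1.
have rest_sum : \sum_(i < k) nu (lift ord0 i) = 1 - t by rewrite -nu_sum1 addrC addKr.
have t_le1 : t <= 1.
  by rewrite -subr_ge0 -rest_sum sumr_ge0.
have [t1|t_neq1] := eqVneq t 1.
  have rest0 i : nu (lift ord0 i) = 0.
    apply: (psumr_eq0P (P := predT) (F := fun i => nu (lift ord0 i))) => //.
    by rewrite rest_sum t1 subrr.
  rewrite t1 mul1r big1 ?addr0 => [|i _]; last by rewrite rest0 mul0r.
  congr f; apply/ffunP => x; rewrite ffunE big_ord_recl -/t t1 mul1r big1 ?addr0 //.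
  by move=> i _; rewrite rest0 mul0r.
have s_gt0 : 0 < 1 - t by rewrite subr_gt0 lt_neqAle t_neq1 t_le1.
pose nu' i := nu (lift ord0 i) / (1 - t).
have nu'_sum1 : \sum_i nu' i = 1 by rewrite -mulr_suml rest_sum divff ?gt_eqF.
have nu'_ge0 i : 0 <= nu' i by rewrite divr_ge0 ?nu_ge0 ?ltW.
have -> : [ffun x => \sum_j nu j * mu j x] =
    [ffun x => t * mu ord0 x + (1 - t) *
      [ffun x => \sum_j nu' j * mu (lift ord0 j) x] x].
  apply/ffunP => x; rewrite !ffunE big_ord_recl mulr_sumr; congr (_ + _).
  by apply: eq_bigr => j _; rewrite /nu'; field; rewrite gt_eqF.
rewrite f_aff ?IH ?nu_ge0 ?t_le1 //; last exact: is_dist_mix.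
congr (_ + _); rewrite mulr_sumr; apply: eq_bigr => j _.
by rewrite /nu'; field; rewrite gt_eqF.
Qed.

End AffineOnDistributions.

Section RestrictedGame.
Variables (R : realType) (X A : finType).
Variables (occ : policy R X A -> {ffun X -> R}) (r : X -> A -> {ffun X -> R} -> R).
Variables (n : nat) (pol : 'I_n -> policy R X A).
Implicit Type nu : {ffun 'I_n -> R}.

Lemma nash_restricted_cce nu :
  restricted_nash occ r pol nu -> restricted_cce occ r pol [:: (1, nu)].
Proof.
move=> [nu_dist nu_nash]; split; last by move=> k; rewrite big_seq1 mul1r subr_le0.
split=> [p|]; last by rewrite big_seq1.
by rewrite mem_seq1 => /eqP ->.
Qed.

Lemma nash_support nu : restricted_nash occ r pol nu -> forall i,
  nu i * J occ r (pol i) (mu_of occ pol nu) =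
  nu i * J_mix occ r pol nu (mu_of occ pol nu).
Proof.
move=> [[nu_ge0 nu_sum1] nu_nash] i; set mu := mu_of occ pol nu.
have gap_ge0 j : 0 <= nu j * (J_mix occ r pol nu mu - J occ r (pol j) mu).
  by rewrite mulr_ge0 ?subr_ge0.
have gap_sum0 : \sum_j nu j * (J_mix occ r pol nu mu - J occ r (pol j) mu) = 0.
  by under eq_bigr do rewrite mulrBr; rewrite sumrB -mulr_suml nu_sum1 mul1r subrr.
apply/eqP; rewrite eq_sym -subr_eq0 -mulrBr; apply/eqP.
by apply: (psumr_eq0P (P := predT) (F := fun j => nu j * _)) => // j _.
Qed.

Lemma nash_restricted_ce nu :
  restricted_nash occ r pol nu -> restricted_ce occ r pol [:: (1, nu)].
Proof.
move=> nu_nash; have [[nu_ge0 _] nu_br] := nu_nash.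
split; first exact/(nash_restricted_cce nu_nash).1.
move=> i k; rewrite big_seq1 mul1r /= mulrBr nash_support // -mulrBr.
by rewrite mulr_ge0_le0 ?subr_le0.
Qed.

Lemma restricted_nash_exists :
  (forall pi, is_policy pi -> is_dist (occ pi)) -> (0 < n)%N ->
  (forall i, is_policy (pol i)) -> mu_diff_affine occ r ->
  exists nu, restricted_nash occ r pol nu.
Proof.
move=> occ_dist n_gt0 pol_pol J_aff; pose i0 : 'I_n := Ordinal n_gt0.
pose D k mu := J occ r (pol k) mu - J occ r (pol i0) mu.
have [nu [nu_ge0 nu_sum1 nu_sym]] :=
  symmetric_nash_exists (fun k j => D k (occ (pol j))) n_gt0.
pose nuf : {ffun 'I_n -> R} := [ffun j => nu j]; set mu := mu_of occ pol nuf.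
have D_mu k : \sum_j D k (occ (pol j)) * nu j = D k mu.
  under eq_bigr do rewrite mulrC.
  rewrite -affine_on_dist_mix // => [|mu1 mu2 t *|j]; last exact: occ_dist.
    by congr D; apply/ffunP => x; rewrite !ffunE; apply: eq_bigr => j _; rewrite ffunE.
  exact: J_aff.
have D_mix : \sum_i nu i * D i mu = J_mix occ r pol nuf mu - J occ r (pol i0) mu.
  rewrite -[J _ _ (pol i0) mu]mul1r -nu_sum1 mulr_suml -sumrB.
  by apply: eq_bigr => i _; rewrite ffunE mulrBr.
exists nuf; split.
  by split=> [j|]; rewrite ?ffunE //; under eq_bigr do rewrite ffunE.
move=> k; have := nu_sym k; rewrite D_mu.
under eq_bigr do rewrite D_mu.
by rewrite D_mix lerD2r.
Qed.

End RestrictedGame.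

Theorem mainTheorem9 (R : realType) (X A : finType)
  (occ : policy R X A -> {ffun X -> R})
  (r : X -> A -> {ffun X -> R} -> R)
  (n : nat) (pol : 'I_n -> policy R X A) :
  (forall pi, is_policy pi -> is_dist (occ pi)) ->
  (0 < n)%N ->
  (forall i, is_policy (pol i)) ->
  mu_diff_affine occ r ->
  (exists nu, restricted_nash occ r pol nu) /\
  (exists rho, restricted_ce occ r pol rho) /\
  (exists rho, restricted_cce occ r pol rho).
Proof.
move=> occ_dist n_gt0 pol_pol J_aff.
have [nu nu_nash] := restricted_nash_exists occ_dist n_gt0 pol_pol J_aff.
split; first by exists nu.
by split; exists [:: (1, nu)]; [exact: nash_restricted_ce | exact: nash_restricted_cce].
Qed.
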